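(* Let $\mathcal{F}$ be an $N$-dimensional commutative algebra with basis $e_1,\dots,e_N$ and structure constants $a^k_{ij}$, such that $e_1$ is a unity element and $\mathcal{F}$ carries a non-degenerate symmetric inner product $\langle\,,\rangle$ with components $\eta_{ij}$ satisfying the Frobenius condition $\langle a\circ b,c\rangle=\langle a,b\circ c\rangle$. Let $h^{(3)}=\frac{1}{6}a_{ijk}u^iu^ju^k$ and $h^{(4)}=a^i_{jk}u^ju^k\,\partial h^{(3)}/\partial u^i$. Then $h^{(4)}$ is a conserved density if and only if $\mathcal{F}$ is a Jordan algebra.
   Context: Summation over repeated indices is understood; indices are raised and lowered with $\eta_{ij}$ and its inverse, so $a_{ijk}=\eta_{ir}a^r_{jk}$ (totally symmetric by the Frobenius condition). A conserved density is a function $h(u^1,\dots,u^N)$ satisfying, for all $k,p$, $a^i_{jk}u^j\,\partial^2 h/\partial u^i\partial u^p=a^i_{jp}u^j\,\partial^2 h/\partial u^i\partial u^k$. A commutative algebra is Jordan if $(x\circ y)\circ(x\circ x)=x\circ(y\circ(x\circ x))$ for all $x,y$. *)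

From HB Require Import structures.
From mathcomp Require Import all_boot all_order all_algebra.
From mathcomp Require Import mpoly.
Set Implicit Arguments. Unset Strict Implicit. Unset Printing Implicit Defensive.
Import Order.TTheory GRing.Theory.
Local Open Scope ring_scope.

(* Structure constants: a k i j = a^k_{ij}, i.e. e_i o e_j = sum_k a^k_{ij} e_k.
   Vectors are row vectors of components x = x^i e_i. *)
Definition fmul (R : ringType) (N : nat) (a : 'I_N -> 'I_N -> 'I_N -> R)
  (x y : 'rV[R]_N) : 'rV[R]_N :=
  \row_k \sum_(i < N) \sum_(j < N) a k i j * x 0 i * y 0 j.

Definition fcommutative (R : ringType) (N : nat) (a : 'I_N -> 'I_N -> 'I_N -> R) :=
  forall k i j, a k i j = a k j i.

Definition is_unity (R : ringType) (N : nat) (a : 'I_N -> 'I_N -> 'I_N -> R) (u : 'I_N) :=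
  forall k j, a k u j = (k == j)%:R.

Definition frobenius (R : ringType) (N : nat) (a : 'I_N -> 'I_N -> 'I_N -> R)
  (eta : 'M[R]_N) :=
  forall i j l, \sum_(r < N) a r i j * eta r l = \sum_(r < N) eta i r * a r j l.

Definition jordan (R : ringType) (N : nat) (a : 'I_N -> 'I_N -> 'I_N -> R) :=
  forall x y : 'rV[R]_N,
    fmul a (fmul a x y) (fmul a x x) = fmul a x (fmul a y (fmul a x x)).

Definition alow (R : ringType) (N : nat) (a : 'I_N -> 'I_N -> 'I_N -> R)
  (eta : 'M[R]_N) (i j k : 'I_N) : R := \sum_(r < N) eta i r * a r j k.

Definition h3 (R : fieldType) (N : nat) (a : 'I_N -> 'I_N -> 'I_N -> R)
  (eta : 'M[R]_N) : {mpoly R[N]} :=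
  (6%:R)^-1 *: \sum_(i < N) \sum_(j < N) \sum_(k < N)
     (alow a eta i j k *: ('X_i * 'X_j * 'X_k)).

Definition h4 (R : fieldType) (N : nat) (a : 'I_N -> 'I_N -> 'I_N -> R)
  (eta : 'M[R]_N) : {mpoly R[N]} :=
  \sum_(i < N) \sum_(j < N) \sum_(k < N)
     (a i j k *: ('X_j * 'X_k * mderiv i (h3 a eta))).

Definition conserved_density (R : fieldType) (N : nat)
  (a : 'I_N -> 'I_N -> 'I_N -> R) (h : {mpoly R[N]}) :=
  forall k p : 'I_N,
    \sum_(i < N) \sum_(j < N) (a i j k *: ('X_j * mderiv p (mderiv i h)))
    = \sum_(i < N) \sum_(j < N) (a i j p *: ('X_j * mderiv k (mderiv i h))).

(* With Y := X o X at the generic point X = (u^1, ..., u^N), the Frobenius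
   condition gives h^(3) = <X, Y>/6 and h^(4) = <Y, Y>/2, whose Hessian is
   d_p d_i h^(4) = 2 <e_i, D_p>, D_p the derivative of X o (X o X) along e_p.
   Contracting with a^i_{jk} u^j, the conserved-density condition says that
   2 <X o e_k, D_p> is symmetric in k and p; its antisymmetric part is
   -2 <e_k, (X o e_p) o Y - X o (e_p o Y)>, a Jordan associator paired with e_k.
   Evaluating at points and using that eta is nondegenerate yields the Jordan
   identity.  Conversely, the Jordan identity is a cubic identity in x, and in
   characteristic 0 a cubic form vanishing everywhere has vanishing
   polarisation, so the identity also holds at the generic point X. *)

From HB Require Import structures.
From mathcomp Require Import all_boot all_order all_algebra.
From mathcomp Require Import mpoly.
From mathcomp Require Import ring.
Import Order.TTheory GRing.Theory.
Local Open Scope ring_scope.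
Set Implicit Arguments. Unset Strict Implicit. Unset Printing Implicit Defensive.

Lemma fmul_is_bilinear (S : comNzRingType) N (c : 'I_N -> 'I_N -> 'I_N -> S) :
  bilinear_for (GRing.Scale.Law.clone _ _ *:%R _) (GRing.Scale.Law.clone _ _ *:%R _)
    (fmul c).
Proof.
split=> [y|x] s u v; apply/rowP=> k; rewrite !mxE big_distrr -big_split;
  apply: eq_bigr=> i _; rewrite big_distrr -big_split; apply: eq_bigr=> j _;
  rewrite !mxE /=; ring.
Qed.

HB.instance Definition _ (S : comNzRingType) N (c : 'I_N -> 'I_N -> 'I_N -> S) :=
  bilinear_isBilinear.Build S 'rV[S]_N 'rV[S]_N 'rV[S]_N _ _ (fmul c)
    (fmul_is_bilinear c).

Definition fpair (S : comNzRingType) N (E : 'M[S]_N) (x y : 'rV[S]_N) : S :=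
  (x *m E *m y^T) 0 0.

Lemma fpair_is_bilinear (S : comNzRingType) N (E : 'M[S]_N) :
  bilinear_for (GRing.Scale.Law.clone _ _ *%R _) (GRing.Scale.Law.clone _ _ *%R _)
    (fpair E).
Proof.
split=> [y|x] s u v;
  by rewrite /fpair ?linearP ?mulmxDl ?mulmxDr -?scalemxAl -?scalemxAr !mxE.
Qed.

HB.instance Definition _ (S : comNzRingType) N (E : 'M[S]_N) :=
  bilinear_isBilinear.Build S 'rV[S]_N 'rV[S]_N S _ _ (fpair E)
    (fpair_is_bilinear E).

(* The middle argument comes first so that [fassoc c y] is bilinear. *)
Definition fassoc (S : comNzRingType) N (c : 'I_N -> 'I_N -> 'I_N -> S)
    (y x z : 'rV[S]_N) : 'rV[S]_N :=
  fmul c (fmul c x y) z - fmul c x (fmul c y z).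

Lemma fassoc_is_bilinear (S : comNzRingType) N (c : 'I_N -> 'I_N -> 'I_N -> S) y :
  bilinear_for (GRing.Scale.Law.clone _ _ *:%R _) (GRing.Scale.Law.clone _ _ *:%R _)
    (fassoc c y).
Proof.
split=> [z|x] s u v; rewrite /fassoc !(linearPl, linearPr);
  apply/rowP=> k; rewrite !mxE; ring.
Qed.

HB.instance Definition _ (S : comNzRingType) N (c : 'I_N -> 'I_N -> 'I_N -> S) y :=
  bilinear_isBilinear.Build S 'rV[S]_N 'rV[S]_N 'rV[S]_N _ _ (fassoc c y)
    (fassoc_is_bilinear c y).

(* The derivative of [x o (x o x)] along [y]. *)
Definition dcube (S : comNzRingType) N (c : 'I_N -> 'I_N -> 'I_N -> S)
    (y x : 'rV[S]_N) : 'rV[S]_N :=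
  fmul c y (fmul c x x) + fmul c x (fmul c y x + fmul c x y).

Section FrobeniusAlgebra.
Variables (S : comNzRingType) (N : nat) (c : 'I_N -> 'I_N -> 'I_N -> S) (E : 'M[S]_N).
Implicit Types (x y z v w : 'rV[S]_N).

Lemma fmul_delta i j : fmul c 'e_i 'e_j = \row_k c k i j.
Proof.
have delta_sum (F : 'I_N -> S) l : \sum_(m < N) F m * ('e_l : 'rV_N) 0 m = F l.
  rewrite (bigD1 l) //= big1 => [|m nml]; rewrite !mxE !eqxx ?mulr1 ?addr0 //.
  by rewrite (negbTE nml) mulr0.
apply/rowP=> k; rewrite !mxE; under eq_bigr do rewrite delta_sum.
exact: delta_sum.
Qed.

Lemma fmul_deltar x k : fmul c x 'e_k = \row_i \sum_(j < N) c i j k * x 0 j.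
Proof.
rewrite [in LHS](row_sum_delta x) (linear_sumlz (fmul c)); apply/rowP => i.
rewrite !mxE summxE; apply: eq_bigr => j _.
by rewrite /= linearZl_LR /= fmul_delta !mxE mulrC.
Qed.

Lemma fpairE x y : fpair E x y = \sum_(i < N) \sum_(j < N) x 0 i * E i j * y 0 j.
Proof.
rewrite /fpair mxE; under eq_bigr do rewrite !mxE big_distrl.
by rewrite exchange_big.
Qed.

Lemma fpair_deltal k v : fpair E 'e_k v = (E *m v^T) k 0.
Proof. by rewrite /fpair -mulmxA -rowE mxE. Qed.

Lemma fpair_deltar v l : fpair E v 'e_l = (v *m E) 0 l.
Proof. by rewrite /fpair trmx_delta -colE mxE. Qed.

Lemma fpair_sum_deltal v w : \sum_(i < N) v 0 i * fpair E 'e_i w = fpair E v w.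
Proof.
rewrite [in RHS](row_sum_delta v) linear_sumlz.
by apply: eq_bigr => i _; rewrite linearZl_LR.
Qed.

Lemma fassoc_sum_mid y x z : fassoc c y x z = \sum_(p < N) y 0 p *: fassoc c 'e_p x z.
Proof.
rewrite {1}(row_sum_delta y) /fassoc.
rewrite linear_sumr linear_sumlz linear_sumlz linear_sumr -sumrB.
by apply: eq_bigr => p _; rewrite !(linearZl_LR, linearZr_LR) scalerBr.
Qed.

Lemma jordanP : jordan c <-> forall p x, fassoc c 'e_p x (fmul c x x) = 0.
Proof.
split=> [J p x | J x y]; first by rewrite /fassoc J subrr.
apply/eqP; rewrite -subr_eq0 -/(fassoc c y x _) fassoc_sum_mid.
by apply/eqP/big1 => p _; rewrite J scaler0.
Qed.

Hypothesis cC : fcommutative c.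
Hypothesis ET : E^T = E.
Hypothesis cE : frobenius c E.

Lemma fmulC x y : fmul c x y = fmul c y x.
Proof.
apply/rowP=> k; rewrite !mxE exchange_big; apply: eq_bigr=> i _.
by apply: eq_bigr=> j _; rewrite cC; ring.
Qed.

Lemma fpairC x y : fpair E x y = fpair E y x.
Proof.
transitivity ((x *m E *m y^T)^T 0 0); first by rewrite mxE.
by rewrite !trmx_mul trmxK ET mulmxA.
Qed.

Lemma fpair_fmulA x y z : fpair E (fmul c x y) z = fpair E x (fmul c y z).
Proof.
rewrite (row_sum_delta x) !linear_sumlz; apply: eq_bigr => i _.
rewrite !linearZl_LR; congr (_ * _).
rewrite (row_sum_delta z) !linear_sumr; apply: eq_bigr => l _.
rewrite !linearZr_LR; congr (_ * _).
rewrite (row_sum_delta y) linear_sumr linear_sumlz linear_sumlz linear_sumr.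
apply: eq_bigr => j _.
rewrite linearZr_LR linearZl_LR linearZl_LR linearZr_LR; congr (_ * _).
rewrite /= fpair_deltal fpair_deltar !fmul_delta !mxE.
by under eq_bigr do rewrite mxE; under [RHS]eq_bigr do rewrite !mxE.
Qed.

Lemma fpair_fmul_sqr x v : fpair E x (fmul c x v) = fpair E v (fmul c x x).
Proof. by rewrite -fpair_fmulA fpairC. Qed.

Lemma fpair_dcube_skew x y z :
  fpair E (fmul c x z) (dcube c y x) - fpair E (fmul c x y) (dcube c z x)
  = - fpair E z (fassoc c y x (fmul c x x)).
Proof.
rewrite /dcube /fassoc; set x2 := fmul c x x.
have yx2 : fpair E (fmul c x z) (fmul c y x2) = fpair E z (fmul c x (fmul c y x2)).
  by rewrite fmulC fpair_fmulA.
have zx2 : fpair E (fmul c x y) (fmul c z x2) = fpair E z (fmul c (fmul c x y) x2).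
  by rewrite fpairC fpair_fmulA fmulC.
have xxyz : fpair E (fmul c x z) (fmul c x (fmul c x y))
          = fpair E (fmul c x y) (fmul c x (fmul c x z)).
  by rewrite -fpair_fmulA fpairC (fmulC _ x).
rewrite !(linearDr (fmul c) x) !(linearDr (fpair E)) (linearNr (fpair E)) /=.
rewrite yx2 zx2 (fmulC y x) (fmulC z x) xxyz; ring.
Qed.
End FrobeniusAlgebra.

Definition cubic_sum (S : comNzRingType) (V : lmodType S) N (x : 'I_N -> S)
    (t : 'I_N -> 'I_N -> 'I_N -> V) : V :=
  \sum_(a < N) \sum_(b < N) \sum_(d < N) (x a * x b * x d) *: t a b d.

Section SymmetricCubicSum.
Variables (S : comNzRingType) (V : lmodType S) (N : nat) (x : 'I_N -> S).
Local Notation cubic_sum := (@cubic_sum S V N x).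

Let cubic_sum_swap12 t : cubic_sum t = cubic_sum (fun a b d => t b a d).
Proof.
rewrite /cubic_sum exchange_big; apply: eq_bigr => a _; apply: eq_bigr => b _.
by apply: eq_bigr => d _; rewrite (mulrC (x b)).
Qed.

Let cubic_sum_swap23 t : cubic_sum t = cubic_sum (fun a b d => t a d b).
Proof.
apply: eq_bigr => a _; rewrite exchange_big; apply: eq_bigr => b _.
by apply: eq_bigr => d _; rewrite mulrAC.
Qed.

Lemma cubic_sum_symmetrize t :
  6%:R *: cubic_sum t = cubic_sum (fun a b d =>
    t a b d + t a d b + t b a d + t b d a + t d a b + t d b a).
Proof.
have cubic_sumD t1 t2 : cubic_sum (fun a b d => t1 a b d + t2 a b d)
                        = cubic_sum t1 + cubic_sum t2.
  rewrite -!big_split; apply: eq_bigr => a _; rewrite -!big_split.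
  by apply: eq_bigr => b _; rewrite -!big_split; apply: eq_bigr => d _; rewrite scalerDr.
rewrite !cubic_sumD.
have -> : cubic_sum (fun a b d => t a d b) = cubic_sum t by rewrite [RHS]cubic_sum_swap23.
have -> : cubic_sum (fun a b d => t b a d) = cubic_sum t by rewrite [RHS]cubic_sum_swap12.
have -> : cubic_sum (fun a b d => t b d a) = cubic_sum t.
  by rewrite [RHS]cubic_sum_swap23 [RHS]cubic_sum_swap12.
have -> : cubic_sum (fun a b d => t d a b) = cubic_sum t.
  by rewrite [RHS]cubic_sum_swap12 [RHS]cubic_sum_swap23.
have -> : cubic_sum (fun a b d => t d b a) = cubic_sum t.
  by rewrite [RHS]cubic_sum_swap12 [RHS]cubic_sum_swap23 [RHS]cubic_sum_swap12.
by rewrite scaler_nat !mulrS mulr0n addr0 !addrA.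
Qed.
End SymmetricCubicSum.

Section MapFrobeniusAlgebra.
Variables (S S' : comNzRingType) (f : {rmorphism S -> S'}) (N : nat).
Variables (c : 'I_N -> 'I_N -> 'I_N -> S) (c' : 'I_N -> 'I_N -> 'I_N -> S').
Hypothesis c'E : forall k i j, c' k i j = f (c k i j).
Implicit Types (x y z : 'rV[S]_N).

Lemma map_fmul x y : map_mx f (fmul c x y) = fmul c' (map_mx f x) (map_mx f y).
Proof.
apply/rowP=> k; rewrite !mxE rmorph_sum; apply: eq_bigr=> i _.
by rewrite rmorph_sum; apply: eq_bigr=> j _; rewrite !rmorphM !mxE c'E.
Qed.

Lemma map_fassoc y x z :
  map_mx f (fassoc c y x z) = fassoc c' (map_mx f y) (map_mx f x) (map_mx f z).
Proof. by rewrite map_mxB !map_fmul. Qed.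

Lemma map_fpair E x y : f (fpair E x y) = fpair (map_mx f E) (map_mx f x) (map_mx f y).
Proof. by rewrite /fpair map_trmx -!map_mxM [RHS]mxE. Qed.

End MapFrobeniusAlgebra.

Section BilinearCubic.
Variables (S : comNzRingType) (N : nat).
Variables (B Q : {bilinear 'rV[S]_N -> 'rV[S]_N -> 'rV[S]_N}).
Local Notation cubic x := (B x (Q x x)).

Lemma bilinear_cubic_expand x :
  cubic x = cubic_sum (fun a => x 0 a) (fun a b d => B 'e_a (Q 'e_b 'e_d)).
Proof.
rewrite {1 2 3}(row_sum_delta x) linear_sumlz; apply: eq_bigr => a _.
rewrite linearZl_LR /= (linear_sumlz Q) (linear_sumr B) scaler_sumr.
apply: eq_bigr => b _.
rewrite /= linearZl_LR /= (linear_sumr Q) (linearZr_LR B) /=.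
rewrite (linear_sumr B) !scaler_sumr; apply: eq_bigr => d _.
by rewrite /= (linearZr_LR Q) /= (linearZr_LR B) /= !scalerA.
Qed.

Lemma bilinear_cubic_polarize x1 x2 x3 :
  B x1 (Q x2 x3) + B x1 (Q x3 x2) + B x2 (Q x1 x3) + B x2 (Q x3 x1)
  + B x3 (Q x1 x2) + B x3 (Q x2 x1)
  = cubic (x1 + x2 + x3) - cubic (x1 + x2) - cubic (x1 + x3) - cubic (x2 + x3)
    + cubic x1 + cubic x2 + cubic x3.
Proof.
rewrite !(linearDl Q, linearDr Q) !(linearDl B, linearDr B).
by apply/rowP => k; rewrite !mxE; ring.
Qed.

End BilinearCubic.

Lemma fassoc_cubic_map (S S' : comNzRingType) (f : {rmorphism S -> S'}) N
    (c : 'I_N -> 'I_N -> 'I_N -> S) (c' : 'I_N -> 'I_N -> 'I_N -> S') y :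
  (forall k i j, c' k i j = f (c k i j)) ->
  (forall w, fassoc c y w (fmul c w w) = 0) ->
  forall x, 6%:R *: fassoc c' (map_mx f y) x (fmul c' x x) = 0.
Proof.
move=> c'E cubic0 x.
pose t a b d := fassoc c y 'e_a (fmul c 'e_b 'e_d).
have t_sym0 a b d : t a b d + t a d b + t b a d + t b d a + t d a b + t d b a = 0.
  by rewrite (bilinear_cubic_polarize (fassoc c y) (fmul c)) /= !cubic0 !(subr0, addr0).
have map_t a b d : fassoc c' (map_mx f y) 'e_a (fmul c' 'e_b 'e_d) = map_mx f (t a b d).
  by rewrite (map_fassoc c'E) (map_fmul c'E) !map_delta_mx.
rewrite (bilinear_cubic_expand (fassoc c' _) (fmul c')) cubic_sum_symmetrize.
apply/big1 => a _; apply/big1 => b _; apply/big1 => d _.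
by rewrite /= !map_t -!map_mxD t_sym0 map_mx0 scaler0.
Qed.

Lemma fpair_delta_eq0 (S : comUnitRingType) N (E : 'M[S]_N) v :
  E \in unitmx -> (forall k, fpair E 'e_k v = 0) -> v = 0.
Proof.
move=> E_unit v0; have Ev0 : E *m v^T = 0.
  by apply/matrixP => k j; rewrite ord1 -fpair_deltal v0 mxE.
by apply: trmx_inj; rewrite -[v^T](mulKmx E_unit) Ev0 mulmx0 trmx0.
Qed.

Section ConservedDensity.
Variables (R : fieldType) (N : nat) (a : 'I_N -> 'I_N -> 'I_N -> R) (eta : 'M[R]_N).
Local Notation P := {mpoly R[N]}.
Local Notation A := (fun k i j => (a k i j)%:MP : P).
Local Notation Eta := (map_mx (@mpolyC N R) eta).
Local Notation X := (\row_i 'X_i : 'rV[P]_N).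
Local Notation dmx p := (map_mx (mderiv p)).

Lemma mderivXE p i : mderiv p ('X_i : P) = (i == p)%:R.
Proof.
rewrite mderivX mnm1E; case: eqP => [->|_]; last by rewrite scale0r.
have -> : (U_(p) - U_(p) = 0)%MM by apply/mnmP => j; rewrite mnmBE mnm0E subnn.
by rewrite mpolyX0 scale1r.
Qed.

Lemma dmx_X p : dmx p X = 'e_p.
Proof. by apply/rowP => i; rewrite !mxE mderivXE eqxx. Qed.

Lemma dmx_delta p i : dmx p ('e_i : 'rV[P]_N) = 0.
Proof. by apply/rowP => j; rewrite !mxE -mpolyC_nat mderivC. Qed.

Lemma dmx_fmul p x y : dmx p (fmul A x y) = fmul A (dmx p x) y + fmul A x (dmx p y).
Proof.
apply/rowP => k; rewrite !mxE raddf_sum -big_split; apply: eq_bigr => i _.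
rewrite raddf_sum -big_split; apply: eq_bigr => j _.
by rewrite /= !mderivM mderivC !mxE; ring.
Qed.

Lemma mderiv_fpair p x y :
  mderiv p (fpair Eta x y) = fpair Eta (dmx p x) y + fpair Eta x (dmx p y).
Proof.
rewrite !fpairE raddf_sum -big_split; apply: eq_bigr => i _.
rewrite raddf_sum -big_split; apply: eq_bigr => j _.
by rewrite /= !mderivM !mxE mderivC; ring.
Qed.

Lemma h3E : h3 a eta = 6%:R^-1 *: fpair Eta X (fmul A X X).
Proof.
rewrite /h3 fpairE; congr (_ *: _); apply: eq_bigr => i _.
under eq_bigr do under eq_bigr do rewrite /alow scaler_suml.
under eq_bigr do rewrite exchange_big; rewrite exchange_big.
apply: eq_bigr => r _; rewrite !mxE big_distrr; apply: eq_bigr => j _.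
rewrite big_distrr; apply: eq_bigr => k _.
by rewrite /= !mxE -mul_mpolyC mpolyCM; ring.
Qed.

Lemma jordan_of_generic : eta \in unitmx ->
  (forall k p, fpair Eta 'e_k (fassoc A 'e_p X (fmul A X X)) = 0) -> jordan a.
Proof.
move=> eta_unit H; apply/jordanP => p x; apply: (fpair_delta_eq0 eta_unit) => k.
pose v i := x 0 i.
have evalA k' i j : a k' i j = meval v (A k' i j) by rewrite mevalC.
have evalX : map_mx (meval v) X = x by apply/rowP => i; rewrite !mxE mevalXU.
have evalEta : map_mx (meval v) Eta = eta by apply/matrixP => i j; rewrite !mxE mevalC.
have := congr1 (meval v) (H k p).
by rewrite map_fpair (map_fassoc evalA) (map_fmul evalA) !map_delta_mx evalX evalEta meval0.
Qed.

Hypothesis six_neq0 : 6%:R != 0 :> R.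

Lemma generic_fassoc_eq0 : jordan a -> forall p, fassoc A 'e_p X (fmul A X X) = 0.
Proof.
move=> /jordanP J p.
have := fassoc_cubic_map (f := @mpolyC N R) (c' := A) (fun _ _ _ => erefl) (J p) X.
move/(congr1 ( *:%R (6%:R^-1)%:MP)).
by rewrite map_delta_mx scalerA -mpolyC_nat -mpolyCM mulVf // mpolyC1 scale1r scaler0.
Qed.

Hypotheses (aC : fcommutative a) (etaT : eta^T = eta) (a_eta : frobenius a eta).

Let AC : fcommutative A. Proof. by move=> k i j; rewrite aC. Qed.
Let EtaT : Eta^T = Eta. Proof. by rewrite map_trmx etaT. Qed.
Let A_Eta : frobenius A Eta.
Proof.
move=> i j l; under eq_bigr do rewrite mxE -mpolyCM.
by under [RHS]eq_bigr do rewrite mxE -mpolyCM; rewrite -!rmorph_sum a_eta.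
Qed.

Let two_neq0 : 2%:R != 0 :> R.
Proof. by apply: contraNneq six_neq0 => two0; rewrite (natrM R 2 3) two0 mul0r. Qed.

Lemma mderiv_h3 i : mderiv i (h3 a eta) = 2%:R^-1 *: fpair Eta 'e_i (fmul A X X).
Proof.
rewrite h3E mderivZ mderiv_fpair dmx_X dmx_fmul dmx_X (linearDr (fpair Eta)) /=.
rewrite (fmulC AC 'e_i) (fpair_fmul_sqr EtaT A_Eta); set q := fpair _ _ _.
rewrite -[q + (q + q)]/(q *+ 3) -scaler_nat scalerA; congr (_ *: _).
by field; rewrite two_neq0 six_neq0.
Qed.

Lemma h4E : h4 a eta = 2%:R^-1 *: fpair Eta (fmul A X X) (fmul A X X).
Proof.
rewrite /h4 -fpair_sum_deltal scaler_sumr; apply: eq_bigr => i _.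
rewrite mderiv_h3 mxE big_distrl scaler_sumr; apply: eq_bigr => j _.
rewrite big_distrl scaler_sumr; apply: eq_bigr => k _.
by rewrite /= !mxE -!mul_mpolyC; ring.
Qed.

Lemma mderiv_h4 i : mderiv i (h4 a eta) = 2%:R *: fpair Eta 'e_i (fmul A X (fmul A X X)).
Proof.
rewrite h4E mderivZ mderiv_fpair dmx_fmul dmx_X [fpair Eta (fmul A X X) _]fpairC //.
rewrite (fmulC AC X) (linearDl (fpair Eta)) /= (fpair_fmulA A_Eta); set q := fpair _ _ _.
rewrite -[q + q]/(q *+ 2) -[_ + _]/((q *+ 2) *+ 2) -!scaler_nat !scalerA.
by congr (_ *: _); field.
Qed.

Lemma mderiv2_h4 p i :
  mderiv p (mderiv i (h4 a eta)) = 2%:R *: fpair Eta 'e_i (dcube A 'e_p X).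
Proof.
rewrite mderiv_h4 mderivZ mderiv_fpair dmx_delta (linear0l (fpair Eta)) add0r.
by rewrite !dmx_fmul dmx_X.
Qed.

Lemma conserved_density_h4E : conserved_density a (h4 a eta) <->
  forall k p, fpair Eta 'e_k (fassoc A 'e_p X (fmul A X X)) = 0.
Proof.
have lhsE k p :
    \sum_(i < N) \sum_(j < N) (a i j k *: ('X_j * mderiv p (mderiv i (h4 a eta))))
    = 2%:R *: fpair Eta (fmul A X 'e_k) (dcube A 'e_p X).
  rewrite -fpair_sum_deltal scaler_sumr; apply: eq_bigr => i _.
  rewrite fmul_deltar mxE big_distrl scaler_sumr; apply: eq_bigr => j _.
  by rewrite mderiv2_h4 /= !mxE -!mul_mpolyC; ring.
have skewE k p : 2%:R *: fpair Eta (fmul A X 'e_k) (dcube A 'e_p X)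
                 - 2%:R *: fpair Eta (fmul A X 'e_p) (dcube A 'e_k X)
                 = - (2%:R *: fpair Eta 'e_k (fassoc A 'e_p X (fmul A X X))).
  by rewrite -scalerBr (fpair_dcube_skew AC EtaT A_Eta) scalerN.
split => H k p.
- move: (H k p); rewrite !lhsE => /eqP.
  by rewrite -subr_eq0 skewE oppr_eq0 scaler_eq0 (negbTE two_neq0) => /eqP.
- by apply/eqP; rewrite -subr_eq0 !lhsE skewE H scaler0 oppr0.
Qed.
End ConservedDensity.

Unset Implicit Arguments.

Theorem proposition2 (R : fieldType) (n : nat)
  (a : 'I_n.+1 -> 'I_n.+1 -> 'I_n.+1 -> R) (eta : 'M[R]_n.+1) :
  [pchar R] =i pred0 ->
  fcommutative a ->
  is_unity a ord0 ->
  eta^T = eta ->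
  eta \in unitmx ->
  frobenius a eta ->
  (conserved_density a (h4 a eta) <-> jordan a).
Proof.
move=> charR0 aC _ etaT eta_unit a_eta.
have six_neq0 : 6%:R != 0 :> R by rewrite (pcharf0P _).1.
rewrite (conserved_density_h4E six_neq0 aC etaT a_eta).
split=> [|J k p]; first exact: jordan_of_generic.
by rewrite (generic_fassoc_eq0 six_neq0 J) linear0r.
Qed.
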